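(* Let $\kappa\in\mathbb{N}$, $\eta\in\{2,3,\ldots\}\cup\{\infty\}$ and let $\pmb{\lambda}=\{\lambda_{-k}\}_{k=0}^{\kappa-1}\cup\{\lambda_{i,j}\}_{i,j=1}^{\eta,\infty}\subset(0,\infty)$ with $\lambda_{i,j}>1$ for $i\in\mathbb{N}\cap[1,\eta]$, $j\ge2$. If the weighted shift $S_{\pmb{\lambda}}\in\mathbf{B}(\ell^2(V_{\eta,\kappa}))$ is completely hyperexpansive and $r$-generation flat for some $r\ge3$, then $S_{\pmb{\lambda}}$ is $2$-generation flat.
   Context: $\mathcal{T}_{\eta,\kappa}$ is the directed tree with vertices $V_{\eta,\kappa}=\{-k:k\in\mathbb{N}\cap[0,\kappa]\}\sqcup\{(i,j):i\in\mathbb{N}\cap[1,\eta],j\ge1\}$ and edges $(-k,-k+1)$ ($1\le k\le\kappa$), $(0,(i,1))$, $((i,j),(i,j+1))$; the weighted shift with weights $\pmb{\lambda}$ is the bounded operator $S_{\pmb{\lambda}}e_v=\sum_{u\text{ child of }v}\lambda_ue_u$ (weight $\lambda_{-k}$ sits at vertex $-k$, $\lambda_{i,j}$ at $(i,j)$). $S_{\pmb{\lambda}}$ is $r$-generation flat if $\lambda_{i,j}=\lambda_{1,j}$ for all $j\ge r$ and $i\in\mathbb{N}\cap[1,\eta]$. A real sequence $(a_k)_{k\ge0}$ is completely alternating if $\sum_{k=0}^n(-1)^k\binom nk a_{k+m}\le0$ for all $m\ge0,n\ge1$; an operator $T$ is completely hyperexpansive if $(\|T^nf\|^2)_{n\ge0}$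 is completely alternating for every vector $f$. *)

From HB Require Import structures.
From mathcomp Require Import all_boot all_order all_algebra.
From mathcomp Require Import all_classical all_reals.
From mathcomp Require Import ereal esum.
From mathcomp Require Import all_classical.
Set Implicit Arguments. Unset Strict Implicit. Unset Printing Implicit Defensive.
Import Order.TTheory GRing.Theory Num.Theory.
Local Open Scope ring_scope.
Local Open Scope classical_set_scope.

(* Vertices of T_{eta,kappa}: [VT k] is the vertex -k, [VB i j] is (i,j). *)
Definition vert : choiceType := (nat + nat * nat)%type.
Definition VT (k : nat) : vert := inl k.
Definition VB (i j : nat) : vert := inr (i, j).

(* eta : option nat, [None] meaning eta = infinity. *)
Definition eta_le (eta : option nat) (i : nat) : bool :=
  if eta is Some n then (i <= n)%N else true.

Definition inV (eta : option nat) (kappa : nat) (v : vert) : bool :=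
  match v with
  | inl k => (k <= kappa)%N
  | inr (i, j) => [&& (1 <= i)%N, eta_le eta i & (1 <= j)%N]
  end.

Definition Vset (eta : option nat) (kappa : nat) : set vert :=
  [set v | inV eta kappa v].

(* The weighted shift S_lambda acting on functions V -> R:
   (S f)(u) = lambda_u f(parent u), and (S f)(root) = 0.
   lamT k = lambda_{-k} (0 <= k < kappa), lamB i j = lambda_{i,j}. *)
Definition wshift (R : realType) (eta : option nat) (kappa : nat)
  (lamT : nat -> R) (lamB : nat -> nat -> R) (f : vert -> R) (v : vert) : R :=
  if ~~ inV eta kappa v then 0 else
  match v with
  | inl k => if (k < kappa)%N then lamT k * f (VT k.+1) else 0
  | inr (i, j) => if j == 1%N then lamB i 1%N * f (VT 0)
              else lamB i j * f (VB i j.-1)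
  end.

Definition sqnorm (R : realType) (eta : option nat) (kappa : nat)
  (f : vert -> R) : \bar R :=
  \esum_(v in Vset eta kappa) ((f v) ^+ 2)%:E.

Definition in_l2 (R : realType) eta kappa (f : vert -> R) : Prop :=
  (sqnorm eta kappa f < +oo)%E.

Definition wshift_bounded (R : realType) eta kappa lamT lamB : Prop :=
  exists C : R, forall f : vert -> R, in_l2 eta kappa f ->
    (sqnorm eta kappa (@wshift R eta kappa lamT lamB f)
       <= C%:E * sqnorm eta kappa f)%E.

Definition completely_alternating (R : realType) (a : nat -> R) : Prop :=
  forall m n : nat, (1 <= n)%N ->
    \sum_(0 <= k < n.+1) (-1) ^+ k * ('C(n, k))%:R * a (k + m)%N <= 0.

Definition wshift_CHE (R : realType) eta kappa lamT lamB : Prop :=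
  forall f : vert -> R, in_l2 eta kappa f ->
    completely_alternating
      (fun n => fine (sqnorm eta kappa (iter n (@wshift R eta kappa lamT lamB) f))).

Definition gen_flat (R : realType) (eta : option nat) (lamB : nat -> nat -> R)
  (r : nat) : Prop :=
  forall i j : nat, (r <= j)%N -> (1 <= i)%N -> eta_le eta i ->
    lamB i j = lamB 1%N j.

From Pilot Require Import Defs.
From mathcomp Require Import all_boot all_order all_algebra.
From mathcomp Require Import all_classical all_reals.
From mathcomp Require Import ereal esum.
From mathcomp Require Import ring lra.
Set Implicit Arguments. Unset Strict Implicit. Unset Printing Implicit Defensive.
Import Order.TTheory GRing.Theory Num.Theory.
Local Open Scope ring_scope.

(* If a is completely alternating, d_k(m) := -(nabla^(k+1) a)(m) is nonnegative
   and nonincreasing in k and in m, and telescoping gives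
   (k+1) d_k(1) <= a(1) - a(0): the iterated differences of a decay like 1/k,
   except possibly at m = 0.
   Let p_i(n) = lambda_(i,2) ... lambda_(i,n+1), so that ||S^n e_(i,1)||^2 = p_i(n)^2.
   Splitting S e_0 along branch 1, branch i and the rest h gives
     ||S^(n+1) e_0||^2 = lambda_(1,1)^2 p_1(n)^2 + lambda_(i,1)^2 p_i(n)^2 + ||S^n h||^2,
   a sum of completely alternating sequences, and the shift by one makes the
   differences of p_1^2 and p_i^2 decay at every m, m = 0 included.
   Flatness gives p_i^2 = c p_1^2 from generation r on, so e := p_i^2 - c p_1^2
   vanishes eventually while its differences decay; downward induction (once e
   vanishes beyond m, nabla^k e(m) = e(m) for all k) shows e = 0.  As
   p_i(0) = p_1(0) = 1, c = 1, hence p_i = p_1 and lambda_(i,j) = lambda_(1,j)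
   for j >= 2. *)

Section Nabla.
Variable R : pzRingType.
Implicit Types (a b : nat -> R) (p : R).

Fixpoint nabla a (k m : nat) : R :=
  if k is k'.+1 then nabla a k' m - nabla a k' m.+1 else a m.

Lemma nabla_sum a n m :
  nabla a n m = \sum_(0 <= j < n.+1) (-1) ^+ j * 'C(n, j)%:R * a (j + m)%N.
Proof.
elim: n m => [|n IH] m; first by rewrite big_nat1 expr0 bin0 !mul1r add0n.
rewrite /= !IH [in RHS]big_nat_recl //.
under [in RHS]eq_bigr do rewrite binS natrD mulrDr mulrDl.
rewrite big_split /= addrA; congr (_ + _).
  rewrite [in LHS]big_nat_recl // [in RHS]big_nat_recr //=.
  by rewrite (bin_small (ltnSn n)) mulr0 mul0r addr0 !bin0.
rewrite -sumrN; apply: eq_bigr => j _.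
by rewrite exprS addSnnS !mulN1r !mulNr.
Qed.

Lemma nabla_shift a k m : nabla (fun n => a n.+1) k m = nabla a k m.+1.
Proof. by elim: k m => [|k IH] m //=; rewrite !IH. Qed.

Lemma nabla_lin a b p k m :
  nabla (fun n => p * a n + b n) k m = p * nabla a k m + nabla b k m.
Proof. by elim: k m => [|k IH] m //=; rewrite !IH mulrBr addrACA opprD. Qed.

Lemma nabla_eventually0 a N k m :
  (forall n, (N <= n)%N -> a n = 0) -> (N <= m)%N -> nabla a k m = 0.
Proof.
move=> a0; elim: k m => [|k IH] m Nm /=; first exact: a0.
by rewrite !IH ?subr0 // ltnW.
Qed.

End Nabla.

Section CompletelyAlternating.
Variable R : realType.
Implicit Types (a b x z : nat -> R).

Lemma completely_alternating_nabla a :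
  completely_alternating a -> forall k m, nabla a k.+1 m <= 0.
Proof. by move=> ca k m; rewrite nabla_sum; apply: ca. Qed.

Section OneSequence.
Variable a : nat -> R.
Hypothesis a_ca : completely_alternating a.
Let nabla_le0 k m : nabla a k.+1 m <= 0 := completely_alternating_nabla a_ca k m.

Lemma nabla_ca_leS k m : nabla a k.+1 m <= nabla a k.+1 m.+1.
Proof. by have := nabla_le0 k.+1 m; rewrite /= subr_le0. Qed.

Lemma nabla_ca_at0_le k m : nabla a k.+1 0 <= nabla a k.+1 m.
Proof. by elim: m => [|m IH] //; apply: le_trans IH (nabla_ca_leS _ _). Qed.

Lemma nabla_ca_le_nablaS k m : nabla a k.+1 m <= nabla a k.+2 m.
Proof. by have := nabla_le0 k m.+1; rewrite /=; lra. Qed.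

Lemma nabla_ca_decay k : k.+1%:R * - nabla a k.+1 1 <= a 1 - a 0.
Proof.
suff : k.+1%:R * - nabla a k.+1 1 - nabla a k.+2 0 <= a 1 - a 0.
  by have := nabla_le0 k.+1 0; lra.
elim: k => [|k IH]; first by rewrite /= mul1r; lra.
have le_k : k.+1%:R * - nabla a k.+2 1 <= k.+1%:R * - nabla a k.+1 1.
  by rewrite ler_wpM2l // lerN2 nabla_ca_le_nablaS.
have -> : nabla a k.+3 0 = nabla a k.+2 0 - nabla a k.+2 1 by [].
rewrite mulrSr mulrDl mul1r; lra.
Qed.

End OneSequence.

Lemma ca_summand_decay x a b z (u v : R) :
  completely_alternating x -> completely_alternating a ->
  completely_alternating b -> completely_alternating z -> 0 < u -> 0 <= v ->
  (forall n, x n.+1 = u * a n + v * b n + z n) ->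
  forall k m, k.+1%:R * - nabla a k.+1 m <= (x 1 - x 0) / u.
Proof.
move=> x_ca a_ca b_ca z_ca u_gt0 v_ge0 xE k m.
have xN : nabla x k.+1 1 = u * nabla a k.+1 0 + (v * nabla b k.+1 0 + nabla z k.+1 0).
  rewrite -nabla_shift (_ : (fun n => x n.+1) = fun n => u * a n + (v * b n + z n)).
    by rewrite (nabla_lin a (fun n => v * b n + z n)) nabla_lin.
  by apply/funext => n; rewrite xE addrA.
have a_mono : u * - nabla a k.+1 m <= u * - nabla a k.+1 0.
  by rewrite ler_pM2l // lerN2 nabla_ca_at0_le.
have b_le0 : v * nabla b k.+1 0 <= 0.
  by rewrite mulr_ge0_le0 // completely_alternating_nabla.
have z_le0 := completely_alternating_nabla z_ca k 0.
rewrite ler_pdivlMr // -mulrA [_ * u]mulrC.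
apply: le_trans (nabla_ca_decay x_ca k); apply: ler_wpM2l => //.
by rewrite xN; rewrite !mulrN in a_mono; lra.
Qed.

End CompletelyAlternating.

Lemma eq0_of_natmul_bounded (R : archiRealFieldType) (y C : R) :
  (forall k, k.+1%:R * `|y| <= C) -> y = 0.
Proof.
move=> yC; apply/normr0_eq0/eqP; rewrite eq_le normr_ge0 andbT leNgt.
apply/negP => y_gt0.
have C_ge0 : 0 <= C / `|y|.
  by rewrite divr_ge0 // (le_trans _ (yC 0%N)) // mul1r.
set k := Num.bound (C / `|y|).
have : C < k.+1%:R * `|y|.
  rewrite -ltr_pdivrMr //; apply: lt_le_trans (archi_boundP C_ge0) _.
  by rewrite ler_nat.
by rewrite ltNge yC.
Qed.

Lemma eq0_of_nabla_decay (R : archiRealFieldType) (e : nat -> R) N C :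
  (forall n, (N <= n)%N -> e n = 0) ->
  (forall k m, k.+1%:R * `|nabla e k.+1 m| <= C) -> forall n, e n = 0.
Proof.
move=> e_tail e_decay.
suff e0 d n : (N <= n + d)%N -> e n = 0 by move=> n; apply: (e0 N); rewrite leq_addl.
elim: d n => [|d IH] n Nn; first by apply: e_tail; rewrite addn0 in Nn.
have nabla_e k : nabla e k n = e n.
  elim: k => [|k IHk] //=; rewrite IHk (@nabla_eventually0 _ _ n.+1) ?subr0 //.
  by move=> n' n'_gt; apply: IH; rewrite (leq_trans Nn) // addnS -addSn leq_add2r.
by apply: (@eq0_of_natmul_bounded _ _ C) => k; rewrite -(nabla_e k.+1).
Qed.

Lemma ca_eventually_proportional_eq (R : realType) (x a b z : nat -> R) (u v c : R) N :
  completely_alternating x -> completely_alternating a ->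
  completely_alternating b -> completely_alternating z -> 0 < u -> 0 < v ->
  (forall n, x n.+1 = u * a n + v * b n + z n) ->
  a 0 = b 0 -> a 0 != 0 -> (forall n, (N <= n)%N -> b n = c * a n) ->
  forall n, b n = a n.
Proof.
move=> x_ca a_ca b_ca z_ca u_gt0 v_gt0 xE ab0 a0_neq0 b_tail.
have xE' n : x n.+1 = v * b n + u * a n + z n by rewrite xE (addrC (u * a n)).
have a_decay := ca_summand_decay x_ca a_ca b_ca z_ca u_gt0 (ltW v_gt0) xE.
have b_decay := ca_summand_decay x_ca b_ca a_ca z_ca v_gt0 (ltW u_gt0) xE'.
pose e n := - c * a n + b n.
have e0 : forall n, e n = 0.
  apply: (@eq0_of_nabla_decay _ _ N ((x 1 - x 0) / v + `|c| * ((x 1 - x 0) / u))).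
    by move=> n Nn; rewrite /e b_tail // mulNr addNr.
  move=> k m; rewrite nabla_lin.
  have a_le0 := completely_alternating_nabla a_ca k m.
  have b_le0 := completely_alternating_nabla b_ca k m.
  apply: le_trans (_ : k.+1%:R * (- nabla b k.+1 m + `|c| * - nabla a k.+1 m) <= _).
    rewrite ler_wpM2l // addrC; apply: le_trans (ler_normD _ _) _.
    by rewrite normrM normrN (ler0_norm a_le0) (ler0_norm b_le0).
  rewrite mulrDr mulrCA; apply: lerD; first exact: b_decay.
  by apply: ler_wpM2l => //; apply: a_decay.
have c1 : c = 1.
  apply/eqP; rewrite eq_sym -subr_eq0; apply/eqP/(mulIf a0_neq0).
  by have := e0 0; rewrite /e -ab0 mul0r => <-; ring.
move=> n; apply/eqP; rewrite -subr_eq0.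
by have := e0 n; rewrite /e c1 mulN1r addrC => ->.
Qed.

Section WeightedShift.
Variables (R : realType) (kappa : nat) (eta : option nat).
Variables (lamT : nat -> R) (lamB : nat -> nat -> R).
Local Notation S := (wshift eta kappa lamT lamB).
Local Notation sqnorm := (sqnorm eta kappa).
Local Notation inV := (inV eta kappa).

Lemma eta_le1 i : (1 <= i)%N -> eta_le eta i -> eta_le eta 1.
Proof. by case: eta => //= n; apply: leq_trans. Qed.

Definition evec (v0 : vert) : vert -> R := fun v => if v == v0 then 1 else 0.

Lemma sqnorm_scale_evec a v0 : inV v0 -> sqnorm (fun v => a * evec v0 v) = (a ^+ 2)%:E.
Proof.
move=> v0_in; rewrite /Defs.sqnorm.
transitivity (\esum_(v in [set v0]) ((a * evec v0 v) ^+ 2)%:E).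
  rewrite esum_mkcond [RHS]esum_mkcond; apply: eq_esum => v _.
  have [->|ne] := eqVneq v v0.
    by rewrite (@mem_set _ (Vset eta kappa) v0) // (@mem_set _ [set v0] v0).
  rewrite /evec (negbTE ne) mulr0 expr0n /=.
  by case: (v \in Vset eta kappa); case: (v \in [set v0]%classic).
by rewrite esum_set1 ?lee_fin ?sqr_ge0 // /evec eqxx mulr1.
Qed.

Lemma evec_l2 v0 : inV v0 -> in_l2 eta kappa (evec v0).
Proof.
move=> v0_in; rewrite /in_l2 (_ : evec v0 = fun v => 1 * evec v0 v).
  by rewrite sqnorm_scale_evec // ltry.
by apply/funext => v; rewrite mul1r.
Qed.

Lemma sqnorm_ge0 (f : vert -> R) : (0 <= sqnorm f)%E.
Proof. by apply: esum_ge0 => v _; rewrite lee_fin sqr_ge0. Qed.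

Lemma wshiftD f g : S (fun v => f v + g v) = (fun v => S f v + S g v).
Proof.
apply/funext => v; rewrite /wshift; case: ifP => _; first by rewrite addr0.
case: v => [k|[i j]]; first by case: ifP => _; rewrite ?mulrDr ?addr0.
by case: ifP => _; rewrite mulrDr.
Qed.

Lemma iter_wshiftD n f g :
  iter n S (fun v => f v + g v) = (fun v => iter n S f v + iter n S g v).
Proof. by elim: n => [|n IH] //=; rewrite IH wshiftD. Qed.

Lemma wshift_evecB a i j : (1 <= i)%N -> eta_le eta i -> (1 <= j)%N ->
  S (fun v => a * evec (VB i j) v) = (fun v => (a * lamB i j.+1) * evec (VB i j.+1) v).
Proof.
move=> i_ge1 i_le j_ge1; apply/funext => v; rewrite /wshift /evec /VB.
case v_in: (inV v) => /=; last first.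
  case: eqP => [E|]; last by rewrite mulr0.
  by move: v_in; rewrite E /= i_ge1 i_le.
case: v v_in => [k|[i' j']] /= v_in.
  by case: ifP => _; rewrite !mulr0.
case: j' v_in => [|[|j3]] v_in /=; first by case/and3P: v_in.
  rewrite (_ : (inr (i', 1%N) == inr (i, j.+1)) = false) ?mulr0 //.
  by apply/eqP => -[_ E]; rewrite -E in j_ge1.
case E1: (inr (i', j3.+1) == inr (i, j)); case E2: (inr (i', j3.+2) == inr (i, j.+1)).
- by move/eqP: E2 => -[-> ->]; rewrite !mulr1 mulrC.
- by move: E2; move/eqP: E1 => [-> <-] /negbT/eqP.
- by move: E1; move/eqP: E2 => [-> <-] /negbT/eqP.
- by rewrite !mulr0.
Qed.

Fixpoint branch_prod i n : R :=
  if n is n'.+1 then lamB i n'.+2 * branch_prod i n' else 1.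

Lemma iter_wshift_evecB1 a i n : (1 <= i)%N -> eta_le eta i ->
  iter n S (fun v => a * evec (VB i 1) v)
  = (fun v => (a * branch_prod i n) * evec (VB i n.+1) v).
Proof.
move=> i_ge1 i_le; elim: n => [|n IH] /=; first by apply/funext => v; rewrite mulr1.
rewrite IH wshift_evecB //; apply/funext => v.
by rewrite [lamB _ _ * _]mulrC mulrA.
Qed.

Lemma sqnorm_iter_evecB1 i n : (1 <= i)%N -> eta_le eta i ->
  sqnorm (iter n S (evec (VB i 1))) = (branch_prod i n ^+ 2)%:E.
Proof.
move=> i_ge1 i_le; rewrite (_ : evec (VB i 1) = fun v => 1 * evec (VB i 1) v).
  by rewrite iter_wshift_evecB1 // sqnorm_scale_evec /= ?i_ge1 ?i_le // mul1r.
by apply/funext => v; rewrite mul1r.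
Qed.

Definition trunk_or_branch i (v : vert) : bool :=
  if v is inr (i', _) then (i' == 1%N) || (i' == i) else true.

Definition vanishes_on (P : pred vert) (f : vert -> R) := forall v, P v -> f v = 0.

Lemma wshift_vanishes_on i f :
  vanishes_on (trunk_or_branch i) f -> vanishes_on (trunk_or_branch i) (S f).
Proof.
move=> f0 v v_tb; rewrite /wshift; case: ifP => // _.
case: v v_tb => [k|[i' j']] v_tb; first by case: ifP => _ //; rewrite f0 ?mulr0.
by case: ifP => _; rewrite f0 ?mulr0.
Qed.

Lemma iter_wshift_vanishes_on i n f :
  vanishes_on (trunk_or_branch i) f -> vanishes_on (trunk_or_branch i) (iter n S f).
Proof. by move=> f0; elim: n => [|n IH] //=; apply: wshift_vanishes_on. Qed.

Lemma sqnorm_evec2D i m c1 ci g : (1 <= i)%N -> eta_le eta i -> i != 1%N ->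
  (1 <= m)%N -> vanishes_on (trunk_or_branch i) g ->
  sqnorm (fun v => c1 * evec (VB 1 m) v + ci * evec (VB i m) v + g v)
  = ((c1 ^+ 2)%:E + (ci ^+ 2)%:E + sqnorm g)%E.
Proof.
move=> i_ge1 i_le i_neq1 m_ge1 g0.
rewrite -(@sqnorm_scale_evec c1 (VB 1 m)); last by rewrite /= (eta_le1 i_ge1 i_le) m_ge1.
rewrite -(@sqnorm_scale_evec ci (VB i m)); last by rewrite /= i_ge1 i_le m_ge1.
rewrite /Defs.sqnorm -!esumD.
2-5: by move=> v _; rewrite ?adde_ge0 // lee_fin sqr_ge0.
apply: eq_esum => v _; rewrite -!EFinD; congr (_%:E); rewrite /evec /VB.
case E1: (v == inr (1%N, m)); case E2: (v == inr (i, m)).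
- by move: E2; rewrite (eqP E1) => /eqP [i1]; rewrite i1 eqxx in i_neq1.
- by rewrite (g0 v) ?(eqP E1) //= ?eqxx; ring.
- by rewrite (g0 v) ?(eqP E2) //= ?eqxx ?orbT; ring.
- by rewrite !mulr0; ring.
Qed.

Definition rest i : vert -> R := fun v =>
  S (evec (VT 0)) v - lamB 1 1 * evec (VB 1 1) v - lamB i 1 * evec (VB i 1) v.

Lemma rest_vanishes_on i : (1 <= i)%N -> eta_le eta i -> i != 1%N ->
  vanishes_on (trunk_or_branch i) (rest i).
Proof.
move=> i_ge1 i_le i_neq1 v v_tb; rewrite /rest /wshift /evec /VB /VT.
case v_in: (inV v) => /=; last first.
  case E1: (v == inr (1%N, 1%N)).
    by move: v_in; rewrite (eqP E1) /= (eta_le1 i_ge1 i_le).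
  case E2: (v == inr (i, 1%N)); first by move: v_in; rewrite (eqP E2) /= i_ge1 i_le.
  by rewrite !mulr0 !subr0.
case: v v_tb v_in => [k|[i' [|[|j]]]] /= v_tb v_in.
- by case: ifP => _; rewrite ?mulr0 !subr0.
- by case/and3P: v_in.
- case E1: (inr (i', 1%N) == inr (1%N, 1%N)); case E2: (inr (i', 1%N) == inr (i, 1%N)).
  + by move: E2; move/eqP: E1 => [->] /eqP [i1]; rewrite i1 eqxx in i_neq1.
  + by move/eqP: E1 => [->]; ring.
  + by move/eqP: E2 => [->]; ring.
  + by case/orP: v_tb => /eqP i'E; [rewrite i'E eqxx in E1 | rewrite i'E eqxx in E2].
- case E1: (inr (i', j.+2) == inr (1%N, 1%N)); first by move/eqP: E1.
  case E2: (inr (i', j.+2) == inr (i, 1%N)); first by move/eqP: E2.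
  by ring.
Qed.

Lemma sqnorm_iter_root i n : (1 <= i)%N -> eta_le eta i -> i != 1%N ->
  sqnorm (iter n.+1 S (evec (VT 0)))
  = (((lamB 1 1 * branch_prod 1 n) ^+ 2)%:E + ((lamB i 1 * branch_prod i n) ^+ 2)%:E
     + sqnorm (iter n S (rest i)))%E.
Proof.
move=> i_ge1 i_le i_neq1; have one_le := eta_le1 i_ge1 i_le; rewrite iterSr.
have -> : S (evec (VT 0))
    = (fun v => lamB 1 1 * evec (VB 1 1) v + lamB i 1 * evec (VB i 1) v + rest i v).
  by apply/funext => v; rewrite /rest; ring.
rewrite (iter_wshiftD n _ (rest i)) iter_wshiftD !iter_wshift_evecB1 //.
by rewrite sqnorm_evec2D //; apply: iter_wshift_vanishes_on; apply: rest_vanishes_on.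
Qed.

Hypothesis S_bounded : wshift_bounded eta kappa lamT lamB.

Lemma l2_wshift f : in_l2 eta kappa f -> in_l2 eta kappa (S f).
Proof.
have [C S_le] := S_bounded => f_l2.
have f_fin : sqnorm f \is a fin_num by rewrite ge0_fin_numE // sqnorm_ge0.
by apply: le_lt_trans (S_le f f_l2) _; rewrite -(fineK f_fin) -EFinM ltry.
Qed.

Lemma l2_iter_wshift n f : in_l2 eta kappa f -> in_l2 eta kappa (iter n S f).
Proof. by move=> f_l2; elim: n => [|n IH] //=; apply: l2_wshift. Qed.

Lemma l2_rest i : (1 <= i)%N -> eta_le eta i -> i != 1%N -> in_l2 eta kappa (rest i).
Proof.
move=> i_ge1 i_le i_neq1.
have := l2_iter_wshift 1 (@evec_l2 (VT 0) isT).
rewrite /in_l2 (@sqnorm_iter_root i 0) //=.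
by case: (sqnorm (rest i)) (sqnorm_ge0 (rest i)) => // r _ _; rewrite ltry.
Qed.

Lemma fine_sqnorm_iter_root i n : (1 <= i)%N -> eta_le eta i -> i != 1%N ->
  fine (sqnorm (iter n.+1 S (evec (VT 0))))
  = lamB 1 1 ^+ 2 * branch_prod 1 n ^+ 2 + lamB i 1 ^+ 2 * branch_prod i n ^+ 2
    + fine (sqnorm (iter n S (rest i))).
Proof.
move=> i_ge1 i_le i_neq1.
have rest_fin : sqnorm (iter n S (rest i)) \is a fin_num.
  by rewrite ge0_fin_numE ?sqnorm_ge0 //; apply/l2_iter_wshift/l2_rest.
by rewrite (@sqnorm_iter_root i) // -(fineK rest_fin) -!EFinD /= !exprMn.
Qed.

Hypothesis lamB_gt0 :
  forall i j, (1 <= i)%N -> eta_le eta i -> (1 <= j)%N -> 0 < lamB i j.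

Lemma branch_prod_gt0 i n : (1 <= i)%N -> eta_le eta i -> 0 < branch_prod i n.
Proof.
by move=> i_ge1 i_le; elim: n => [|n IH] //=; rewrite mulr_gt0 // lamB_gt0.
Qed.

Lemma branch_prod_tail r i : gen_flat eta lamB r -> (1 <= i)%N -> eta_le eta i ->
  forall n, (r <= n)%N ->
  branch_prod i n = branch_prod i r / branch_prod 1 r * branch_prod 1 n.
Proof.
move=> flat i_ge1 i_le n /subnK <-.
have bp1_neq0 : branch_prod 1 r != 0.
  by rewrite gt_eqF // branch_prod_gt0 // (eta_le1 i_ge1 i_le).
elim: (n - r)%N => [|d IH]; first by rewrite add0n divfK.
by rewrite addSn /= flat ?IH 1?mulrCA // -addn2 addnAC leq_addl.
Qed.

Lemma gen_flat2_of_branch_prod_sq i : (1 <= i)%N -> eta_le eta i ->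
  (forall n, branch_prod i n ^+ 2 = branch_prod 1 n ^+ 2) ->
  forall j, (2 <= j)%N -> lamB i j = lamB 1 j.
Proof.
move=> i_ge1 i_le bp_sq_eq.
have one_le := eta_le1 i_ge1 i_le.
have bp_eq n : branch_prod i n = branch_prod 1 n.
  by apply/eqP; rewrite -(@eqrXn2 _ 2) ?bp_sq_eq // ltW // branch_prod_gt0.
move=> [|[|n]] // _; have := bp_eq n.+1; rewrite /= bp_eq.
by apply: mulIf; rewrite gt_eqF // branch_prod_gt0.
Qed.

Hypothesis S_che : wshift_CHE eta kappa lamT lamB.

Lemma ca_branch_prod_sq i : (1 <= i)%N -> eta_le eta i ->
  completely_alternating (fun n => branch_prod i n ^+ 2).
Proof.
move=> i_ge1 i_le.
have /S_che : in_l2 eta kappa (evec (VB i 1)) by apply: evec_l2; rewrite /= i_ge1 i_le.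
by under eq_fun => n do rewrite sqnorm_iter_evecB1 //.
Qed.

Lemma branch_prod_sq_eq r i : gen_flat eta lamB r -> (1 <= i)%N -> eta_le eta i ->
  forall n, branch_prod i n ^+ 2 = branch_prod 1 n ^+ 2.
Proof.
move=> flat i_ge1 i_le; have one_le := eta_le1 i_ge1 i_le.
have [->//|i_neq1] := eqVneq i 1%N.
pose x n := fine (sqnorm (iter n S (evec (VT 0)))).
have xE n : x n.+1 = _ := fine_sqnorm_iter_root n i_ge1 i_le i_neq1.
apply: (ca_eventually_proportional_eq (N := r) _ _ _ _ _ _ xE).
- by apply: S_che; apply: evec_l2.
- exact: ca_branch_prod_sq.
- exact: ca_branch_prod_sq.
- by apply/S_che/l2_rest.
- by rewrite exprn_gt0 ?lamB_gt0.
- by rewrite exprn_gt0 ?lamB_gt0.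
- by [].
- by rewrite expr1n oner_neq0.
- by move=> n rn; rewrite (branch_prod_tail flat i_ge1 i_le rn) exprMn.
Qed.

End WeightedShift.

Theorem theorem9p3 (R : realType) (kappa : nat) (eta : option nat)
  (lamT : nat -> R) (lamB : nat -> nat -> R) :
  (if eta is Some n then (2 <= n)%N else true) ->
  (forall k : nat, (k < kappa)%N -> 0 < lamT k) ->
  (forall i j : nat, (1 <= i)%N -> eta_le eta i -> (1 <= j)%N -> 0 < lamB i j) ->
  (forall i j : nat, (1 <= i)%N -> eta_le eta i -> (2 <= j)%N -> 1 < lamB i j) ->
  wshift_bounded eta kappa lamT lamB ->
  wshift_CHE eta kappa lamT lamB ->
  (exists r : nat, (3 <= r)%N /\ gen_flat eta lamB r) ->
  gen_flat eta lamB 2.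
Proof.
move=> _ _ lamB_gt0 _ S_bounded S_che [r [_ flat]] i j j_ge2 i_ge1 i_le.
apply: (gen_flat2_of_branch_prod_sq lamB_gt0 i_ge1 i_le) => // n.
exact: (branch_prod_sq_eq S_bounded lamB_gt0 S_che flat).
Qed.
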